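(* Let $m,N\ge1$, put $d=m^2+1$ and $n=m+d$, and let $\pi\colon\mathbb R^n\to\mathbb R^m$ be the projection onto the first $m$ coordinates. Define $\mathfrak Y\colon\mathbb R^m\times C(\mathbb R^m\times\mathcal M_{m\times m},\mathbb R^m)\times\mathcal M_{m\times m}^N\to\mathbb R^m$ by $\mathfrak Y(\mathbf y,\sigma,\theta)\coloneqq\mathbf y_N$, where $\theta=(\theta_0,\dots,\theta_{N-1})$, $\mathbf y_0=\mathbf y$ and $\mathbf y_{k+1}=\mathbf y_k+\sigma(\mathbf y_k,\theta_k)$; and define $\mathfrak X\colon\mathbb R^n\times C(\mathbb R^n,\mathbb R^n)^d\times(\mathbb R^d)^{N+1}\to\mathbb R^n$ by $\mathfrak X(\mathbf x,f,\mathbf w)\coloneqq\mathbf x_N$, where $\mathbf w=(\mathbf w_0,\dots,\mathbf w_N)$, $\mathbf x_0=\mathbf x$ and $\mathbf x_{k+1}=\mathbf x_k+\sum_{\mu=1}^df_\mu(\mathbf x_k)(\mathbf w^\mu_{k+1}-\mathbf w^\mu_k)$. Then \[ \mathfrak Y\big(\mathbb R^m\times C(\mathbb R^m\times\mathcal M_{m\times m},\mathbb R^m)\times\mathcal M_{m\times m}^N\big)\subset\pi\circ\mathfrak X\big(\mathbb R^n\times C(\mathbb R^n,\mathbb R^n)^d\times(\mathbb R^d)^{N+1}\big). \]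
   Context: $\mathcal M_{m\times m}$ denotes the space of real $m\times m$ matrices, $C(A,B)$ the continuous maps from $A$ to $B$; the time indices run over $k=0,\dots,N-1$. *)

From HB Require Import structures.
From mathcomp Require Import all_boot all_order all_algebra.
From mathcomp Require Import all_classical all_reals all_analysis.
Set Implicit Arguments. Unset Strict Implicit. Unset Printing Implicit Defensive.
Import Order.TTheory GRing.Theory Num.Theory.
Import numFieldNormedType.Exports.
Local Open Scope ring_scope.

(* Vectors of R^k are row vectors 'rV[R]_k; M_{m x m} is 'M[R]_m.
   Time indices k range over 'I_N, enumerated in increasing order. *)

Definition frakY (R : realType) (m N : nat) (y : 'rV[R]_m)
  (sigma : 'rV[R]_m * 'M[R]_m -> 'rV[R]_m) (theta : 'I_N -> 'M[R]_m) : 'rV[R]_m :=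
  foldl (fun yk (k : 'I_N) => yk + sigma (yk, theta k)) y (enum 'I_N).

(* frakX x f w = x_N, x_0 = x,
   x_{k+1} = x_k + sum_mu f_mu(x_k) (w_{k+1}^mu - w_k^mu);
   w : 'I_(N+1) -> R^d; w_k = w (widen k), w_{k+1} = w (lift ord0 k). *)
Definition frakX (R : realType) (n d N : nat) (x : 'rV[R]_n)
  (f : 'I_d -> 'rV[R]_n -> 'rV[R]_n) (w : 'I_N.+1 -> 'rV[R]_d) : 'rV[R]_n :=
  foldl (fun xk (k : 'I_N) =>
           xk + \sum_(mu < d)
                  (w (lift ord0 k) 0 mu - w (widen_ord (leqnSn N) k) 0 mu) *: f mu xk)
        x (enum 'I_N).

From HB Require Import structures.
From mathcomp Require Import all_boot all_order all_algebra.
From mathcomp Require Import all_classical all_reals all_analysis.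
Import Order.TTheory GRing.Theory Num.Theory.
Import numFieldNormedType.Exports.
Local Open Scope ring_scope.

(* Proof idea: augment the state y in R^m by a copy of the driving path
   w_k = (k, theta_k) in R^(1 + m^2).  The vector field attached to the clock
   coordinate w^0 is (sigma(y, theta), e_0) and the one attached to w^mu,
   mu > 0, is (0, e_mu).  The hidden coordinates then reproduce w_k exactly,
   so at step k the field reads theta_k off the state, and since the clock
   increments by 1 the visible coordinates perform the step y + sigma(y, theta_k). *)

Section matrix_continuity.
Variable R : realType.

Lemma continuous_mxE {a b : nat} (i : 'I_a) (j : 'I_b) :
  continuous (fun A : 'M[R]_(a, b) => A i j).
Proof.
move=> A U /nbhs_ballP[e e0 eU]; apply/nbhs_ballP; exists e => // B [_ AB].
exact: eU.
Qed.

Lemma continuous_matrix (T : topologicalType) (a b : nat) (k : unit)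
    (h : 'I_a -> 'I_b -> T -> R) :
  (forall i j, continuous (h i j)) -> continuous (fun x => \matrix[k]_(i, j) h i j x).
Proof.
move=> hc x U /nbhs_ballP[e e0 eU]; near=> y; apply: eU; split=> //; near: y.
apply: filter_forall => i; apply: filter_forall => j.
apply: (@filterS _ _ (nbhs_filter x) _ _ _ (hc i j x _ (nbhsx_ballx _ _ e0))).
by move=> y /=; rewrite !mxE.
Unshelve. all: by end_near. Qed.

Lemma continuous_row_mx (T : topologicalType) (a b1 b2 : nat)
    (g1 : T -> 'M[R]_(a, b1)) (g2 : T -> 'M[R]_(a, b2)) :
  continuous g1 -> continuous g2 -> continuous (fun x => row_mx (g1 x) (g2 x)).
Proof.
move=> g1_cont g2_cont; apply: continuous_matrix => i j.
case: (fintype.split _) => k x.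
- exact: (continuous_comp (g1_cont x) (continuous_mxE _ _ _)).
- exact: (continuous_comp (g2_cont x) (continuous_mxE _ _ _)).
Qed.

Lemma continuous_col_mx (T : topologicalType) (a1 a2 b : nat)
    (g1 : T -> 'M[R]_(a1, b)) (g2 : T -> 'M[R]_(a2, b)) :
  continuous g1 -> continuous g2 -> continuous (fun x => col_mx (g1 x) (g2 x)).
Proof.
move=> g1_cont g2_cont; apply: continuous_matrix => i j.
case: (fintype.split _) => k x.
- exact: (continuous_comp (g1_cont x) (continuous_mxE _ _ _)).
- exact: (continuous_comp (g2_cont x) (continuous_mxE _ _ _)).
Qed.

Lemma continuous_row (a b : nat) (i : 'I_a) :
  continuous (row i : 'M[R]_(a, b) -> 'rV_b).
Proof. by apply: continuous_matrix => ? j; exact: continuous_mxE. Qed.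

Lemma continuous_vec_mx (a b : nat) :
  continuous (vec_mx : 'rV[R]_(a * b) -> 'M[R]_(a, b)).
Proof. by apply: continuous_matrix => i j; exact: continuous_mxE. Qed.

End matrix_continuity.

Lemma foldl_map (T1 T2 A : Type) (f : A -> T2 -> A) (g : T1 -> T2) (z : A) (s : seq T1) :
  foldl f z (map g s) = foldl (fun z x => f z (g x)) z s.
Proof. by elim: s z => //= x s IHs z. Qed.

Lemma frakX_row_mx (R : realType) (n d N : nat) (x : 'rV[R]_n)
    (M : 'rV[R]_n -> 'M[R]_(d, n)) (W : nat -> 'rV[R]_d) :
  frakX x (fun mu z => row mu (M z)) (fun k : 'I_N.+1 => W k) =
  foldl (fun z i => z + (W i.+1 - W i) *m M z) x (iota 0 N).
Proof.
rewrite /frakX -val_enum_ord foldl_map; congr foldl.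
apply/funext => z; apply/funext => k /=; rewrite mulmx_sum_row.
by congr (_ + _); apply: eq_bigr => mu _; rewrite !mxE.
Qed.

Section augmented_euler.
Context {R : realType} {m p : nat} (sigma : 'rV[R]_m * 'rV[R]_p -> 'rV[R]_m).

Definition augmented_mx (z : 'rV[R]_(m + (1 + p))) : 'M[R]_(1 + p, m + (1 + p)) :=
  row_mx (col_mx (sigma (lsubmx z, rsubmx (rsubmx z))) 0) 1%:M.

Lemma continuous_augmented_mx : continuous sigma -> continuous augmented_mx.
Proof.
move=> sigma_cont; apply: continuous_row_mx; last exact: cst_continuous.
apply: continuous_col_mx; last exact: cst_continuous.
move=> z; apply: continuous_comp; last exact: sigma_cont.
have lsubmx_cont : {for z, continuous (lsubmx : 'rV[R]_(m + (1 + p)) -> 'rV_m)}.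
  exact: continuous_lsubmx.
have rsubmx2_cont :
    {for z, continuous (fun z : 'rV[R]_(m + (1 + p)) => rsubmx (rsubmx z : 'rV_(1 + p)))}.
  by apply: continuous_comp; exact: continuous_rsubmx.
exact: (cvg_pair lsubmx_cont rsubmx2_cont).
Qed.

Variable v : nat -> 'rV[R]_p.

Definition clock_driver (i : nat) : 'rV[R]_(1 + p) := row_mx i%:R (v i).

Lemma augmented_step (y : 'rV[R]_m) (i : nat) :
  row_mx y (clock_driver i) +
    (clock_driver i.+1 - clock_driver i) *m augmented_mx (row_mx y (clock_driver i)) =
  row_mx (y + sigma (y, v i)) (clock_driver i.+1).
Proof.
set W := clock_driver; have dW : W i.+1 - W i = row_mx 1 (v i.+1 - v i).
  by rewrite /W /clock_driver opp_row_mx add_row_mx -natr1 addrAC subrr add0r.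
rewrite [in LHS]dW /augmented_mx row_mxKl row_mxKr /W /clock_driver row_mxKr.
rewrite mul_mx_row mul_row_col mulmx0 addr0 mul1mx mulmx1 -dW add_row_mx.
by rewrite [_ + (_ - _)]addrC subrK.
Qed.

Lemma foldl_augmented_step (y : 'rV[R]_m) (t n : nat) :
  foldl (fun z i => z + (clock_driver i.+1 - clock_driver i) *m augmented_mx z)
        (row_mx y (clock_driver t)) (iota t n) =
  row_mx (foldl (fun y i => y + sigma (y, v i)) y (iota t n)) (clock_driver (t + n)).
Proof.
elim: n t y => [|n IHn] t y /=; first by rewrite addn0.
by rewrite augmented_step IHn (addSnnS t n).
Qed.

Lemma lsubmx_frakX_augmented (N : nat) (y : 'rV[R]_m) :
  lsubmx (frakX (row_mx y (clock_driver 0)) (fun mu z => row mu (augmented_mx z))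
                (fun k : 'I_N.+1 => clock_driver k)) =
  foldl (fun y i => y + sigma (y, v i)) y (iota 0 N).
Proof. by rewrite frakX_row_mx foldl_augmented_step row_mxKl. Qed.

End augmented_euler.

Theorem propositionA1 (R : realType) (m N : nat) (hm : (1 <= m)%N) (hN : (1 <= N)%N)
  (y : 'rV[R]_m) (sigma : 'rV[R]_m * 'M[R]_m -> 'rV[R]_m) (theta : 'I_N -> 'M[R]_m) :
  continuous sigma ->
  exists (x : 'rV[R]_(m + (m ^ 2).+1))
         (f : 'I_(m ^ 2).+1 -> 'rV[R]_(m + (m ^ 2).+1) -> 'rV[R]_(m + (m ^ 2).+1))
         (w : 'I_N.+1 -> 'rV[R]_(m ^ 2).+1),
    (forall mu, continuous (f mu)) /\
    lsubmx (frakX x f w) = frakY y sigma theta.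
Proof.
move=> sigma_cont.
pose sigma_vec (yv : 'rV[R]_m * 'rV[R]_(m * m)) := sigma (yv.1, vec_mx yv.2).
pose v (i : nat) : 'rV[R]_(m * m) := if insub i is Some k then mxvec (theta k) else 0.
have sigma_vec_cont : continuous sigma_vec.
  move=> yv; apply: continuous_comp; last exact: sigma_cont.
  have vec_snd_cont : {for yv, continuous (fun yv : 'rV[R]_m * 'rV_(m * m) => vec_mx yv.2)}.
    by apply: continuous_comp; [exact: cvg_snd | exact: continuous_vec_mx].
  exact: (cvg_pair cvg_fst vec_snd_cont).
exists (row_mx y (clock_driver v 0)), (fun mu z => row mu (augmented_mx sigma_vec z)).
exists (fun k => clock_driver v k); split.
  move=> mu z; apply: continuous_comp; last exact: continuous_row.
  exact: continuous_augmented_mx.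
rewrite lsubmx_frakX_augmented /frakY -val_enum_ord foldl_map; congr foldl.
by apply/funext => yk; apply/funext => k; rewrite /v valK /sigma_vec /= mxvecK.
Qed.
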